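(* In the congestion game, let $R=\sup_{\lambda\ll\lambda_0}\mathrm{PoA}(\lambda)$, and assume that for each $w\in\mathcal{W}$ and every $x\in\mathcal{C}(w)$ there exists $e\in x$ with $c_e(t)>0$ for all $t>0$. Let $W_1,W_2,\dots$ be i.i.d. with law $\lambda_0\in\mathcal{P}(\mathcal{W})$. Then for every $\epsilon>0$ and $c>0$ there exists $N$ such that for all $n\ge N$, $$\mathbb{P}(\mathrm{PoA}_n(W_1,\dots,W_n)\ge R+\epsilon)\le e^{-cn}.$$
   Context: Congestion game: $\mathcal{W}$ finite set of types; $E$ finite set; $\mathcal{X}=2^E\setminus\{\emptyset\}$ (both finite, discrete); $\mathcal{C}$ assigns to each $w$ a nonempty set $\mathcal{C}(w)\subset\mathcal{X}$; each $c_e:[0,\infty)\to[0,\infty)$ is continuous and increasing; $\ell_e(m)=m\{(w,x):e\in x\}$ and $F(m,w,x)=\sum_{e\in x}c_e(\ell_e(m))$ for $m\in\mathcal{P}(\mathcal{W}\times\mathcal{X})$. A Nash equilibrium with type vector $\vec w=(w_1,\dots,w_n)$ is $(x_1,\dots,x_n)$ with $x_i\in\mathcal{C}(w_i)$ and $F(\frac1n\sum_k\delta_{(w_k,x_k)},w_i,x_i)=\min_{y\in\mathcal{C}(w_i)}F(\frac1n\sum_{k\ne i}\delta_{(w_k,x_k)}+\frac1n\delta_{(w_i,y)},w_i,y)$ for all $i$; these exist for all $n$ and $\vec w$. $\widehat{\mathcal{N}}_n(\vec w)$ = set of $\frac1n\sum_i\delta_{(w_i,x_i)}$ over such equilibria;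 $\widehat{\mathcal{A}}_n(\vec w)=\{\frac1n\sum_k\delta_{(w_k,x_k)}:x_i\in\mathcal{C}(w_i)\}$; $V(m)=\int F(m,w,x)\,m(dw,dx)$; $\mathrm{PoA}_n(\vec w)=\sup_{\widehat{\mathcal{N}}_n(\vec w)}V/\inf_{\widehat{\mathcal{A}}_n(\vec w)}V$. For $\lambda\in\mathcal{P}(\mathcal{W})$: $\mathcal{A}(\lambda)=\{m:\text{first marginal }\lambda,\ m\{(w,x):x\in\mathcal{C}(w)\}=1\}$, $\mathcal{M}(\lambda)$ = set of $m\in\mathcal{A}(\lambda)$ with $F(m,w,x)=\min_{y\in\mathcal{C}(w)}F(m,w,y)$ for $m$-a.e. $(w,x)$, and $\mathrm{PoA}(\lambda)=\sup_{\mathcal{M}(\lambda)}V/\inf_{\mathcal{A}(\lambda)}V$. *)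

From HB Require Import structures.
From mathcomp Require Import all_boot all_order all_algebra.
From mathcomp Require Import all_classical all_reals all_analysis.
Set Implicit Arguments. Unset Strict Implicit. Unset Printing Implicit Defensive.
Import Order.TTheory GRing.Theory Num.Theory numFieldNormedType.Exports.
Local Open Scope ring_scope.
Local Open Scope classical_set_scope.

(* Types W (finite set of types) and E (finite set of resources);
   actions x are subsets of E (elements of X = 2^E \ {emptyset}).
   Measures on the finite space W x X are represented by their
   weight functions  m : W * {set E} -> R. *)

Definition isProb (R : realType) (T : finType) (m : T -> R) : Prop :=
  (forall p, 0 <= m p) /\ \sum_(p : T) m p = 1.

Definition load (R : realType) (W E : finType) (m : W * {set E} -> R) (e : E) : R :=
  \sum_(p : W * {set E} | e \in p.2) m p.

(* F(m,w,x) = sum_{e in x} c_e(l_e(m))  (w is not used, as in the paper) *)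
Definition cost (R : realType) (W E : finType) (c : E -> R -> R)
  (m : W * {set E} -> R) (w : W) (x : {set E}) : R :=
  \sum_(e in x) c e (load m e).

Definition Vsoc (R : realType) (W E : finType) (c : E -> R -> R)
  (m : W * {set E} -> R) : R :=
  \sum_(p : W * {set E}) m p * cost c m p.1 p.2.

Definition emp (R : realType) {W E : finType} {n : nat}
  (ws : 'I_n -> W) (xs : 'I_n -> {set E}) : W * {set E} -> R :=
  fun p => n%:R^-1 * \sum_(i < n) ((ws i, xs i) == p)%:R.

Definition upd (E : finType) (n : nat) (xs : 'I_n -> {set E}) (i : 'I_n)
  (y : {set E}) : 'I_n -> {set E} :=
  fun k => if k == i then y else xs k.

Definition feasible (W E : finType) (C : W -> {set {set E}}) (n : nat)
  (ws : 'I_n -> W) (xs : 'I_n -> {set E}) : Prop :=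
  forall i, xs i \in C (ws i).

(* Nash equilibrium: F at the current action equals the minimum over
   unilateral deviations y in C(w_i) (the value at y = x_i is F itself). *)
Definition nash (R : realType) (W E : finType) (c : E -> R -> R)
  (C : W -> {set {set E}}) (n : nat) (ws : 'I_n -> W) (xs : 'I_n -> {set E}) : Prop :=
  feasible C ws xs /\
  forall i y, y \in C (ws i) ->
    cost c (emp R ws xs) (ws i) (xs i) <= cost c (emp R ws (upd xs i y)) (ws i) y.

Definition PoA_n (R : realType) (W E : finType) (c : E -> R -> R)
  (C : W -> {set {set E}}) (n : nat) (ws : 'I_n -> W) : R :=
  sup [set Vsoc c (emp R ws xs) | xs in [set xs | nash c C ws xs]] /
  inf [set Vsoc c (emp R ws xs) | xs in [set xs | feasible C ws xs]].

Definition admissible (R : realType) (W E : finType) (C : W -> {set {set E}})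
  (lam : W -> R) (m : W * {set E} -> R) : Prop :=
  isProb m /\ (forall w, \sum_(x : {set E}) m (w, x) = lam w) /\
  \sum_(p : W * {set E} | p.2 \in C p.1) m p = 1.

(* M(lambda): equilibria; "m-a.e." = on the support {p | m p > 0} *)
Definition wardrop (R : realType) (W E : finType) (c : E -> R -> R)
  (C : W -> {set {set E}}) (lam : W -> R) (m : W * {set E} -> R) : Prop :=
  admissible C lam m /\
  forall p, 0 < m p -> forall y, y \in C p.1 -> cost c m p.1 p.2 <= cost c m p.1 y.

Definition PoA (R : realType) (W E : finType) (c : E -> R -> R)
  (C : W -> {set {set E}}) (lam : W -> R) : R :=
  sup [set Vsoc c m | m in [set m | wardrop c C lam m]] /
  inf [set Vsoc c m | m in [set m | admissible C lam m]].

Definition abs_cont (R : realType) (W : finType) (lam lam0 : W -> R) : Prop :=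
  forall w, lam0 w = 0 -> lam w = 0.

Definition PoA_star (R : realType) (W E : finType) (c : E -> R -> R)
  (C : W -> {set {set E}}) (lam0 : W -> R) : R :=
  sup [set PoA c C lam | lam in [set lam | isProb lam /\ abs_cont lam lam0]].

(* P(PoA_n(W_1,...,W_n) >= r) for W_1,...,W_n i.i.d. with law lam0:
   the law of (W_1,...,W_n) on the finite set W^n is the product measure. *)
Definition prob_PoA_ge (R : realType) (W E : finType) (c : E -> R -> R)
  (C : W -> {set {set E}}) (lam0 : W -> R) (n : nat) (r : R) : R :=
  \sum_(ws : {ffun 'I_n -> W})
     (\prod_(i < n) lam0 (ws i)) * ((r <= PoA_n c C (fun i => ws i))%R)%:R.

(* A type vector has positive probability only if all its types lie in the
   support of lam0, so the claim follows from a deterministic bound (and the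
   probability is in fact 0 for large n): for n large, every Nash
   profile of a type vector supported by lam0 costs less than (R + eps/2)
   times any feasible profile for the same types.  If this failed for
   arbitrarily large n, compactness of the simplex would give a cluster point
   (m, a) of the empirical measures of the bad pairs (Nash profile, feasible
   profile).  A unilateral deviation moves each load by at most 1/n and costs
   are continuous, so m is a Wardrop equilibrium for its type marginal
   lam << lam0, while a is admissible for lam and V(m) >= (R + eps/2) V(a).
   Since a feasible measure puts mass >= 1/(|W x 2^E| + 1) on some pair, whose
   action contains a resource of positive cost, V(a) is bounded away from 0,
   and this contradicts PoA(lam) <= R. *)

From HB Require Import structures.
From mathcomp Require Import all_boot all_order all_algebra.
From mathcomp Require Import all_classical all_reals all_analysis.
From mathcomp Require Import lra.
Set Implicit Arguments. Unset Strict Implicit. Unset Printing Implicit Defensive.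
Import Order.TTheory GRing.Theory Num.Theory numFieldNormedType.Exports.
Local Open Scope ring_scope.
Local Open Scope classical_set_scope.

Section RealFacts.
Variable R : realType.

Lemma within_ge0_continuousP (f : R -> R) x :
  {within [set t : R | 0 <= t], continuous f} -> 0 <= x ->
  forall eta, 0 < eta -> exists2 d, 0 < d &
    forall t, 0 <= t -> `|t - x| < d -> `|f t - f x| < eta.
Proof.
move=> /subspace_continuousP fC x0 eta eta0.
have /cvgrPdist_lt /(_ _ eta0) := fC x x0.
rewrite near_withinE => /nbhs_ballP[d /= d0 fd].
exists d => // t t0 tx; rewrite distrC; apply: fd => //.
by rewrite /ball /= distrC.
Qed.

Lemma within_ge0_continuousMid (f : R -> R) :
  {within [set t : R | 0 <= t], continuous f} ->
  {within [set t : R | 0 <= t], continuous (fun t => t * f t)}.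
Proof.
move=> fC x; apply: (@continuousM R (subspace [set t : R | 0 <= t]) id f x).
  exact: incl_subspace_continuous.
exact: fC.
Qed.

Lemma exists_uniform_delta (I : finType) (P : I -> R -> Prop) :
  (forall i, exists2 d, 0 < d & forall d', 0 < d' -> d' <= d -> P i d') ->
  exists2 d, 0 < d & forall i, P i d.
Proof.
move=> hP.
suff [d d0 hd] : exists2 d, 0 < d &
    forall i, i \in enum I -> forall d', 0 < d' -> d' <= d -> P i d'.
  by exists d => // i; apply: hd => //; rewrite mem_enum.
elim: (enum I) => [|j s [d d0 hd]]; first by exists 1.
have [dj dj0 hdj] := hP j.
exists (Num.min d dj); first by rewrite lt_min d0 dj0.
move=> i; rewrite inE => /orP[/eqP-> | iS] d' d'0 d'le.
  by apply: hdj => //; apply: le_trans d'le _; rewrite ge_min lexx orbT.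
by apply: hd => //; apply: le_trans d'le _; rewrite ge_min lexx.
Qed.

Lemma exists_uniform_lower_bound (I : finType) (f : I -> R) :
  (forall i, 0 < f i) -> exists2 b, 0 < b & forall i, b <= f i.
Proof.
move=> f0; apply: (@exists_uniform_delta I (fun i d => d <= f i)) => i.
by exists (f i) => // d' _.
Qed.

Lemma le_of_forall_lerDM (x y K : R) :
  0 <= K -> (forall e, 0 < e -> x <= y + K * e) -> x <= y.
Proof.
move=> K0 hxy; apply/ler_addgt0Pr => e e0.
have K1 : 0 < K + 1 by rewrite ltr_wpDl.
apply: le_trans (hxy _ (divr_gt0 e0 K1)) _; rewrite lerD2l.
by rewrite mulrA ler_pdivrMr // mulrC ler_pM2l // lerDl.
Qed.

Lemma eq_of_forall_distM (x y K : R) :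
  0 <= K -> (forall e, 0 < e -> `|x - y| <= K * e) -> x = y.
Proof.
move=> K0 hxy; apply/eqP; rewrite -subr_eq0 -normr_le0.
by apply: (@le_of_forall_lerDM _ _ K K0) => e e0; rewrite add0r; apply: hxy.
Qed.

Lemma ler_dist_sum (I : finType) (P : pred I) (f g : I -> R) d :
  (forall i, P i -> `|f i - g i| <= d) -> 0 <= d ->
  `|\sum_(i | P i) f i - \sum_(i | P i) g i| <= #|I|%:R * d.
Proof.
move=> hfg d0; rewrite -sumrB; apply: le_trans (ler_norm_sum _ _ _) _.
apply: le_trans (_ : \sum_(i | P i) d <= _); first exact: ler_sum.
rewrite sumr_const -[d *+ _]mulr_natl ler_wpM2r // ler_nat; exact: max_card.
Qed.

Lemma unit_cube_cluster (I : finType) (u : nat -> I -> R) :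
  (forall j i, 0 <= u j i <= 1) ->
  exists z : I -> R, forall d, 0 < d -> forall K, exists2 j, (K <= j)%N &
    forall i, `|u j i - z i| < d.
Proof.
move=> u01; pose v j := \row_(k < #|I|) u j (enum_val k).
have cube_compact := @rV_compact R #|I| (fun _ => `[(0:R), 1]%classic)
  (fun _ => @segment_compact R 0 1).
have [|z [_ zcl]] := cube_compact (v @ \oo) _ _.
  by exists 0%N => // j _ k; rewrite /= mxE in_itv /= u01.
exists (fun i => z ord0 (enum_rank i)) => d d0 K.
have [||_ [[j Kj <-] [_ vj]]] := zcl (v @` [set j | (K <= j)%N]) (ball z d) _ _.
- by exists K => // j /= Kj; exists j.
- exact: nbhsx_ballx.
exists j => // i; have := vj ord0 (enum_rank i).
by rewrite /ball /= mxE enum_rankK distrC.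
Qed.

Lemma exists_large_summand (I : finType) (P : pred I) (f : I -> R) :
  \sum_(i | P i) f i = 1 -> exists2 i, P i & (#|I|.+1)%:R^-1 <= f i.
Proof.
move=> sum1; apply: contrapT => /forall2NP small.
have : \sum_(i | P i) f i <= \sum_(i | P i) (#|I|.+1)%:R^-1.
  apply: ler_sum => i Pi; have [//|/negP] := small i.
  by rewrite -ltNge => /ltW.
rewrite sum1 sumr_const -[_ *+ _]mulr_natl ler_pdivlMr ?ltr0n // mul1r ler_nat.
by rewrite leqNgt ltnS max_card.
Qed.

Lemma natr_mul_divDr1_lt (k : nat) (e : R) :
  0 < e -> k%:R * (e / (k%:R + 1)) < e.
Proof.
move=> e0; have k1 : 0 < k%:R + 1 :> R by rewrite ltr_wpDl.
by rewrite mulrA ltr_pdivrMr // mulrC ltr_pM2l // ltrDl.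
Qed.

Lemma sup_le_ge0 (S : set R) x :
  0 <= x -> (forall y, S y -> y <= x) -> sup S <= x.
Proof.
move=> x0 Sx; have [ne|/set0P/negP/negPn/eqP->] := pselect (S !=set0).
  exact: ge_sup.
by rewrite sup0.
Qed.

Lemma sup_ge0 (S : set R) :
  (forall y, S y -> 0 <= y) -> has_ubound S -> 0 <= sup S.
Proof.
move=> S0 Sub; have [[y Sy]|/set0P/negP/negPn/eqP->] := pselect (S !=set0).
  exact: le_trans (S0 _ Sy) (ub_le_sup Sub Sy).
by rewrite sup0.
Qed.

End RealFacts.

Section Empirical.
Variables (R : realType) (W E : finType).
Local Notation T := (W * {set E})%type.
Implicit Types (m : T -> R) (P : pred T).

Lemma sum_emp n (ws : 'I_n -> W) (xs : 'I_n -> {set E}) P :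
  \sum_(p | P p) emp R ws xs p = n%:R^-1 * \sum_(i < n) (P (ws i, xs i))%:R.
Proof.
rewrite /emp -big_distrr /= exchange_big /=; congr (_ * _).
apply: eq_bigr => i _; rewrite big_mkcond (bigD1 (ws i, xs i)) //= eqxx.
rewrite big1 ?addr0; first by case: (P _).
by move=> p /negbTE; rewrite eq_sym => ->; case: (P p).
Qed.

Lemma sum_emp_eq1 n (ws : 'I_n -> W) (xs : 'I_n -> {set E}) P :
  (0 < n)%N -> (forall i, P (ws i, xs i)) -> \sum_(p | P p) emp R ws xs p = 1.
Proof.
move=> n0 hP; rewrite sum_emp (eq_bigr (fun _ => 1)) => [|i _]; last by rewrite hP.
by rewrite sumr_const card_ord mulVf // pnatr_eq0 -lt0n.
Qed.

Lemma emp_ge0 n (ws : 'I_n -> W) (xs : 'I_n -> {set E}) p : 0 <= emp R ws xs p.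
Proof. by rewrite /emp mulr_ge0 // sumr_ge0. Qed.

Lemma emp_le1 n (ws : 'I_n -> W) (xs : 'I_n -> {set E}) p :
  (0 < n)%N -> emp R ws xs p <= 1.
Proof.
move=> n0; rewrite /emp ler_pdivrMl ?ltr0n // mulr1.
apply: le_trans (_ : \sum_(i < n) (1 : R) <= _); last by rewrite sumr_const card_ord.
by apply: ler_sum => i _; case: (_ == _).
Qed.

Lemma emp_isProb n (ws : 'I_n -> W) (xs : 'I_n -> {set E}) :
  (0 < n)%N -> isProb (emp R ws xs).
Proof. by move=> n0; split; [exact: emp_ge0 | exact: sum_emp_eq1]. Qed.

Lemma emp_gt0_played n (ws : 'I_n -> W) (xs : 'I_n -> {set E}) p :
  0 < emp R ws xs p -> exists i, (ws i, xs i) = p.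
Proof.
move=> emp_gt0; apply/not_existsP => not_played.
move: emp_gt0; rewrite /emp big1 ?mulr0 ?ltxx // => i _.
by case: eqP => // /not_played.
Qed.

Lemma sum_fst (f : T -> R) w : \sum_(p : T | p.1 == w) f p = \sum_x f (w, x).
Proof.
rewrite -[RHS](@big_pred1_eq R 0 +%R W w (fun a => \sum_x f (a, x))) pair_big /=.
by apply: eq_big => [[a b]|[a b]] //=; rewrite andbT.
Qed.

Lemma load_emp n (ws : 'I_n -> W) (xs : 'I_n -> {set E}) e :
  load (emp R ws xs) e = n%:R^-1 * \sum_(i < n) (e \in xs i)%:R.
Proof. exact: sum_emp. Qed.

Lemma load_emp_upd n (ws : 'I_n -> W) (xs : 'I_n -> {set E}) i y e :
  `|load (emp R ws (upd xs i y)) e - load (emp R ws xs) e| <= n%:R^-1.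
Proof.
rewrite !load_emp -mulrBr normrM ger0_norm ?invr_ge0 ?ler0n //.
rewrite (bigD1 i) //= [X in _ - X](bigD1 i) //= /upd eqxx.
rewrite (eq_bigr (fun k => (e \in xs k)%:R)) => [|k /negbTE -> //].
rewrite opprD addrACA subrr addr0.
have [->|n0] := eqVneq n 0%N; first by rewrite invr0 mul0r.
rewrite ler_piMr ?invr_ge0 ?ler0n //.
by case: (e \in y); case: (e \in xs i);
  rewrite ?subrr ?normr0 ?subr0 ?sub0r ?normrN ?normr1.
Qed.

Lemma load_ge0 m e : (forall p, 0 <= m p) -> 0 <= load m e.
Proof. by move=> m0; rewrite /load sumr_ge0. Qed.

Lemma load_le1 m e : isProb m -> load m e <= 1.
Proof.
case=> m0 <-; rewrite /load [X in _ <= X](bigID (fun p : T => e \in p.2)) /=.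
by rewrite lerDl sumr_ge0.
Qed.

Lemma dist_load m m' d e : (forall p, `|m' p - m p| <= d) -> 0 <= d ->
  `|load m' e - load m e| <= #|{: T}|%:R * d.
Proof. by move=> hd; apply: ler_dist_sum => p _; exact: hd. Qed.

Lemma Vsoc_load (c : E -> R -> R) m : Vsoc c m = \sum_e load m e * c e (load m e).
Proof.
rewrite /Vsoc /cost.
under eq_bigr => p _ do rewrite big_distrr /= big_mkcond /=.
rewrite exchange_big /=; apply: eq_bigr => e _.
rewrite /load big_distrl /= [RHS]big_mkcond /=; apply: eq_bigr => p _.
by case: (e \in p.2); rewrite ?mulr0 ?mul0r.
Qed.

End Empirical.

Section Game.
Variables (R : realType) (W E : finType) (C : W -> {set {set E}}) (c : E -> R -> R).
Hypothesis hc_cont : forall e, {within [set t : R | 0 <= t], continuous (c e)}.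
Hypothesis hc_nneg : forall e t, 0 <= t -> 0 <= c e t.
Hypothesis hc_incr : forall e s t, 0 <= s -> s <= t -> c e s <= c e t.
Hypothesis hpos :
  forall w x, x \in C w -> exists e, e \in x /\ forall t, 0 < t -> 0 < c e t.
Local Notation T := (W * {set E})%type.
Implicit Types (m a : T -> R) (lam : W -> R).

Definition Vmax : R := \sum_e c e 1.

Lemma Vmax_ge0 : 0 <= Vmax.
Proof. by apply: sumr_ge0 => e _; apply: hc_nneg. Qed.

Lemma Vsoc_ge0 m : (forall p, 0 <= m p) -> 0 <= Vsoc c m.
Proof.
move=> m0; rewrite Vsoc_load; apply: sumr_ge0 => e _.
by rewrite mulr_ge0 ?hc_nneg // load_ge0.
Qed.

Lemma Vsoc_le_Vmax m : isProb m -> Vsoc c m <= Vmax.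
Proof.
move=> mP; rewrite Vsoc_load; apply: ler_sum => e _.
have l0 := load_ge0 e (proj1 mP); have l1 := load_le1 e mP.
by rewrite -[X in _ <= X]mul1r ler_pM ?hc_nneg ?hc_incr.
Qed.

Lemma Vsoc_lower_bound : exists2 b, 0 < b & forall m, isProb m ->
  \sum_(p | p.2 \in C p.1) m p = 1 -> b <= Vsoc c m.
Proof.
pose K : R := (#|{: T}|.+1)%:R^-1.
have K0 : 0 < K by rewrite invr_gt0 ltr0n.
pose b e := if `[< forall t, 0 < t -> 0 < c e t >] then K * c e K else 1.
have [beta beta0 beta_le] : exists2 beta, 0 < beta & forall e, beta <= b e.
  apply: exists_uniform_lower_bound => e; rewrite /b.
  by case: asboolP => // cpos; rewrite mulr_gt0 ?cpos.
exists beta => // m [m0 m1] mC.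
have [p pC mpK] := exists_large_summand mC.
have [e [ep cpos]] := hpos pC.
have loadK : K <= load m e.
  apply: le_trans mpK _; rewrite /load (bigD1 p) //= lerDl.
  by apply: sumr_ge0 => q _; apply: m0.
apply: le_trans (beta_le e) _; rewrite /b asboolT // Vsoc_load (bigD1 e) //=.
rewrite -[X in X <= _]addr0 lerD //.
  by rewrite ler_pM ?hc_nneg ?hc_incr // ltW.
by apply: sumr_ge0 => e' _; rewrite mulr_ge0 ?hc_nneg ?load_ge0.
Qed.

Lemma cost_Vsoc_continuous m : (forall p, 0 <= m p) -> forall eta, 0 < eta ->
  exists2 d, 0 < d & forall m', (forall p, 0 <= m' p) ->
    (forall e, `|load m' e - load m e| < d) ->
    (forall w x, `|cost c m' w x - cost c m w x| <= eta) /\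
    `|Vsoc c m' - Vsoc c m| <= eta.
Proof.
move=> m0 eta eta0; pose eta' := eta / (#|E|%:R + 1).
have eta'0 : 0 < eta' by rewrite divr_gt0 // ltr_wpDl.
have sum_eta' : #|E|%:R * eta' <= eta := ltW (natr_mul_divDr1_lt _ eta0).
pose resource_close e d := forall t, 0 <= t -> `|t - load m e| < d ->
  `|c e t - c e (load m e)| < eta' /\
  `|t * c e t - load m e * c e (load m e)| < eta'.
have [d d0 hd] : exists2 d, 0 < d & forall e, resource_close e d.
  apply: exists_uniform_delta => e; have l0 := load_ge0 e m0.
  have [d1 d10 hd1] := within_ge0_continuousP (@hc_cont e) l0 eta'0.
  have [d2 d20 hd2] :=
    within_ge0_continuousP (within_ge0_continuousMid (@hc_cont e)) l0 eta'0.
  exists (Num.min d1 d2); first by rewrite lt_min d10 d20.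
  move=> d' _ d'le t t0 /lt_le_trans /(_ d'le); rewrite lt_min => /andP[t1 t2].
  by split; [exact: hd1 | exact: hd2].
exists d => // m' m'0 close; split => [w x|]; rewrite ?Vsoc_load;
  apply: le_trans sum_eta'; apply: ler_dist_sum (ltW eta'0) => e _;
  have [h1 h2] := hd e _ (load_ge0 e m'0) (close e); exact: ltW.
Qed.

Section PoABounds.
Variable b : R.
Hypothesis b_gt0 : 0 < b.
Hypothesis b_le_Vsoc : forall m, isProb m ->
  \sum_(p | p.2 \in C p.1) m p = 1 -> b <= Vsoc c m.

Lemma PoA_ge0_le lam : 0 <= PoA c C lam <= Vmax / b.
Proof.
rewrite /PoA; set Sw := [set Vsoc c m | m in _]; set Sa := [set Vsoc c m | m in _].
have Sw0V : forall y, Sw y -> 0 <= y <= Vmax.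
  move=> y [m [[mP _] _] <-].
  by rewrite Vsoc_ge0 ?Vsoc_le_Vmax //; case: mP.
have supSw0 : 0 <= sup Sw.
  by apply: sup_ge0 => [y /Sw0V/andP[]//|]; exists Vmax => y /Sw0V/andP[].
have supSwV : sup Sw <= Vmax.
  by apply: sup_le_ge0 Vmax_ge0 _ => y /Sw0V/andP[].
have [ne|/set0P/negP/negPn/eqP->] := pselect (Sa !=set0); last first.
  by rewrite inf0 invr0 mulr0 lexx divr_ge0 ?Vmax_ge0 ?ltW.
have infSa_ge : b <= inf Sa.
  by apply: lb_le_inf ne _ => y [m [mP [_ mC]] <-]; apply: b_le_Vsoc.
have infSa0 : 0 < inf Sa := lt_le_trans b_gt0 infSa_ge.
rewrite divr_ge0 ?(ltW infSa0) //=; apply: ler_pM => //.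
  by rewrite invr_ge0 ltW.
by rewrite lef_pV2 ?posrE.
Qed.

Lemma Vsoc_ratio_le_PoA lam m a : wardrop c C lam m -> admissible C lam a ->
  Vsoc c m / Vsoc c a <= PoA c C lam.
Proof.
move=> mW aA; rewrite /PoA; set Sw := [set Vsoc c m | m in _].
set Sa := [set Vsoc c m | m in _].
have Sa_ge : forall y, Sa y -> b <= y by move=> y [a' [a'P [_ a'C]] <-]; apply: b_le_Vsoc.
have infSa_ge : b <= inf Sa by apply: lb_le_inf Sa_ge; exists (Vsoc c a), a.
have infSa0 : 0 < inf Sa := lt_le_trans b_gt0 infSa_ge.
have infSa_le : inf Sa <= Vsoc c a by apply: ge_inf; [exists b | exists a].
have Vm_le : Vsoc c m <= sup Sw.
  apply: ub_le_sup; last by exists m.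
  by exists Vmax => y [m' [[m'P _] _] <-]; apply: Vsoc_le_Vmax.
apply: ler_pM => //.
- by apply: Vsoc_ge0; case: mW => [[[]]].
- by rewrite invr_ge0 (le_trans (ltW infSa0)).
- by rewrite lef_pV2 // posrE (lt_le_trans infSa0).
Qed.

Lemma PoA_le_PoA_star lam0 lam : isProb lam -> abs_cont lam lam0 ->
  PoA c C lam <= PoA_star c C lam0.
Proof.
move=> lamP lam_ac; apply: ub_le_sup; last by exists lam.
by exists (Vmax / b) => r [l _ <-]; case/andP: (PoA_ge0_le l).
Qed.

End PoABounds.

Lemma PoA_star_ge0 lam0 : isProb lam0 -> 0 <= PoA_star c C lam0.
Proof.
move=> lam0P; have [b b0 b_le] := Vsoc_lower_bound.
have /andP[PoA0 _] := PoA_ge0_le b0 b_le lam0.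
exact: le_trans PoA0 (PoA_le_PoA_star b0 b_le lam0P _).
Qed.

Definition marginal m (w : W) : R := \sum_x m (w, x).

Local Notation profile_pred :=
  (forall n, ('I_n -> W) -> ('I_n -> {set E}) -> ('I_n -> {set E}) -> Prop).

(* Both profiles of a pair share the type vector ws, so the two limits have
   the same type marginal. *)
Definition limit_pair (Q : profile_pred) m a :=
  forall d, 0 < d -> forall K, exists n (ws : 'I_n -> W) xs ys,
    [/\ (K < n)%N, Q n ws xs ys, forall p, `|emp R ws xs p - m p| < d
      & forall p, `|emp R ws ys p - a p| < d].

Lemma exists_limit_pair (Q : profile_pred) :
  (forall K, exists n (ws : 'I_n -> W) xs ys, (K < n)%N /\ Q n ws xs ys) ->
  exists m a, limit_pair Q m a.
Proof.
move=> QK; pose prof n (ws : 'I_n -> W) xs ys (q : bool * T) : R :=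
  emp R ws (if q.1 then xs else ys) q.2.
have /choice[u Qu] : forall K, exists v, exists n (ws : 'I_n -> W) xs ys,
    [/\ (K < n)%N, Q n ws xs ys & v = prof n ws xs ys].
  move=> K; have [n [ws [xs [ys [Kn Qn]]]]] := QK K.
  by exists (prof n ws xs ys), n, ws, xs, ys.
have [|z z_cluster] := @unit_cube_cluster _ _ u.
  move=> K q; have [n [ws [xs [ys [Kn _ ->]]]]] := Qu K.
  by rewrite emp_ge0 emp_le1 // (leq_ltn_trans _ Kn).
exists (fun p => z (true, p)), (fun p => z (false, p)) => d d0 K.
have [j Kj close] := z_cluster d d0 K.
have [n [ws [xs [ys [jn Qn uj]]]]] := Qu j.
exists n, ws, xs, ys; split => // [|p|p]; first exact: leq_ltn_trans Kj jn.
- by have := close (true, p); rewrite uj.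
- by have := close (false, p); rewrite uj.
Qed.

Section Limit.
Variable Q : profile_pred.
Variables m a : T -> R.
Hypothesis ma_limit : limit_pair Q m a.

Lemma limit_pair_ge0 : (forall p, 0 <= m p) /\ (forall p, 0 <= a p).
Proof.
split=> p; apply: (@le_of_forall_lerDM _ _ _ 1) => // d d0;
  have [n [ws [xs [ys [_ _ close_xs close_ys]]]]] := ma_limit d0 0%N.
- have := emp_ge0 R ws xs p; have := close_xs p; rewrite ltr_distlC; lra.
- have := emp_ge0 R ws ys p; have := close_ys p; rewrite ltr_distlC; lra.
Qed.

Lemma limit_pair_sum (P : pred T) s :
  (forall n (ws : 'I_n -> W) xs ys, (0 < n)%N -> Q ws xs ys ->
    \sum_(p | P p) emp R ws xs p = s /\ \sum_(p | P p) emp R ws ys p = s) ->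
  \sum_(p | P p) m p = s /\ \sum_(p | P p) a p = s.
Proof.
move=> sum_s; split; apply: (@eq_of_forall_distM _ _ _ #|{: T}|%:R) => // d d0;
  have [n [ws [xs [ys [n0 Qn close_xs close_ys]]]]] := ma_limit d0 0%N;
  have [<- ys_s] := sum_s n ws xs ys n0 Qn.
- by rewrite distrC; apply: ler_dist_sum (ltW d0) => p _; apply: ltW.
- by rewrite -ys_s distrC; apply: ler_dist_sum (ltW d0) => p _; apply: ltW.
Qed.

Lemma limit_pair_marginal w : \sum_x a (w, x) = \sum_x m (w, x).
Proof.
rewrite -!sum_fst; apply: (@eq_of_forall_distM _ _ _ (#|{: T}|%:R *+ 2)) => [|d d0].
  by rewrite mulrn_wge0.
have [n [ws [xs [ys [_ _ close_xs close_ys]]]]] := ma_limit d0 0%N.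
have same_marginal : \sum_(p | p.1 == w) emp R ws xs p =
    \sum_(p | p.1 == w) emp R ws ys p by rewrite !sum_emp.
apply: le_trans (ler_distD (\sum_(p | p.1 == w) emp R ws ys p) _ _) _.
rewrite mulrnAl mulr2n lerD //.
  by rewrite distrC; apply: ler_dist_sum (ltW d0) => p _; apply: ltW.
by rewrite -same_marginal; apply: ler_dist_sum (ltW d0) => p _; apply: ltW.
Qed.

Lemma limit_pair_loads d : 0 < d -> forall K, exists n (ws : 'I_n -> W) xs ys,
  [/\ (K < n)%N, Q ws xs ys, forall p, `|emp R ws xs p - m p| < d,
    forall e, `|load (emp R ws xs) e - load m e| < d
  & forall e, `|load (emp R ws ys) e - load a e| < d].
Proof.
move=> d0 K; pose d' := d / (#|{: T}|%:R + 1).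
have T1 : 0 < #|{: T}|%:R + 1 :> R by rewrite ltr_wpDl.
have d'0 : 0 < d' by rewrite divr_gt0.
have d'_le : d' <= d by rewrite ler_pdivrMr // ler_peMr ?lerDr // ltW.
have load_close m1 m2 : (forall p, `|m1 p - m2 p| < d') ->
    forall e, `|load m1 e - load m2 e| < d.
  move=> close e; apply: le_lt_trans (natr_mul_divDr1_lt _ d0).
  by apply: dist_load (ltW d'0) => p; apply: ltW.
have [n [ws [xs [ys [Kn Qn close_xs close_ys]]]]] := ma_limit d'0 K.
exists n, ws, xs, ys; split => //; try exact: load_close.
by move=> p; apply: lt_le_trans d'_le.
Qed.

Lemma limit_pair_wardrop :
  (forall n (ws : 'I_n -> W) xs ys, Q ws xs ys -> nash c C ws xs) ->
  forall p, 0 < m p -> forall y, y \in C p.1 -> cost c m p.1 p.2 <= cost c m p.1 y.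
Proof.
move=> Qnash p mp y yC; have [m0 _] := limit_pair_ge0.
apply: (@le_of_forall_lerDM _ _ _ 2) => // eta eta0.
have [d d0 cost_cont] := cost_Vsoc_continuous m0 eta0.
pose d' := Num.min (m p) (d / 2).
have d'0 : 0 < d' by rewrite lt_min mp divr_gt0.
have d'_mp : d' <= m p by rewrite ge_min lexx.
have d'_d2 : d' <= d / 2 by rewrite ge_min lexx orbT.
have [n [ws [xs [ys [Kn /Qnash[_ xs_nash] close xs_loads _]]]]] :=
  limit_pair_loads d'0 (Num.truncn (2 / d)).
have n_inv : n%:R^-1 < d / 2.
  have n0 : 0 < n%:R :> R by rewrite ltr0n (leq_ltn_trans _ Kn).
  have : 2 / d < n%:R by apply: lt_le_trans (truncnS_gt _) _; rewrite ler_nat.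
  by rewrite -[d / 2]invf_div ltf_pV2 ?posrE ?divr_gt0.
have [i played] : exists i, (ws i, xs i) = p.
  by apply: emp_gt0_played; have := close p; rewrite ltr_distl; lra.
move: yC; rewrite -played /= => yC.
have upd_loads e : `|load (emp R ws (upd xs i y)) e - load m e| < d.
  apply: le_lt_trans (ler_distD (load (emp R ws xs) e) _ _) _.
  by have := load_emp_upd R ws xs i y e; have := xs_loads e; lra.
have d'_d : d' < d by lra.
have [cost_xs _] := cost_cont _ (emp_ge0 R ws xs) (fun e => lt_trans (xs_loads e) d'_d).
have [cost_upd _] := cost_cont _ (emp_ge0 R ws (upd xs i y)) upd_loads.
have := xs_nash i y yC; have := cost_xs (ws i) (xs i); have := cost_upd (ws i) y.
rewrite !ler_distl; lra.
Qed.

Lemma limit_pair_Vsoc_ratio r : 0 <= r ->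
  (forall n (ws : 'I_n -> W) xs ys, Q ws xs ys ->
    r * Vsoc c (emp R ws ys) <= Vsoc c (emp R ws xs)) ->
  r * Vsoc c a <= Vsoc c m.
Proof.
move=> r0 Qr; have [m0 a0] := limit_pair_ge0.
apply: (@le_of_forall_lerDM _ _ _ (r + 1)) => [|eta eta0]; first by rewrite addr_ge0.
have [d1 d10 m_cont] := cost_Vsoc_continuous m0 eta0.
have [d2 d20 a_cont] := cost_Vsoc_continuous a0 eta0.
have d0 : 0 < Num.min d1 d2 by rewrite lt_min d10 d20.
have d_d1 : Num.min d1 d2 <= d1 by rewrite ge_min lexx.
have d_d2 : Num.min d1 d2 <= d2 by rewrite ge_min lexx orbT.
have [n [ws [xs [ys [_ /Qr ratio _ xs_loads ys_loads]]]]] := limit_pair_loads d0 0.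
have [_ Vxs] := m_cont _ (emp_ge0 R ws xs) (fun e => lt_le_trans (xs_loads e) d_d1).
have [_ Vys] := a_cont _ (emp_ge0 R ws ys) (fun e => lt_le_trans (ys_loads e) d_d2).
move: Vxs Vys; rewrite !ler_distl => /andP[_ Vxs] /andP[Vys _].
have := ler_wpM2l r0 Vys; lra.
Qed.

Lemma limit_pair_equilibrium lam0 :
  (forall n (ws : 'I_n -> W) xs ys, Q ws xs ys ->
    [/\ forall i, lam0 (ws i) != 0, nash c C ws xs & feasible C ws ys]) ->
  [/\ isProb (marginal m), abs_cont (marginal m) lam0,
    wardrop c C (marginal m) m & admissible C (marginal m) a].
Proof.
move=> Qeq; have [m0 a0] := limit_pair_ge0.
have [m1 a1] : \sum_(p | predT p) m p = 1 /\ \sum_(p | predT p) a p = 1.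
  by apply: limit_pair_sum => n ws xs ys n0 _; rewrite !sum_emp_eq1.
have [mC aC] : \sum_(p | p.2 \in C p.1) m p = 1 /\ \sum_(p | p.2 \in C p.1) a p = 1.
  apply: limit_pair_sum => n ws xs ys n0 /Qeq[_ [xs_feas _] ys_feas].
  by rewrite !sum_emp_eq1.
have mA : admissible C (marginal m) m by [].
split => //.
- split=> [w|]; first exact: sumr_ge0.
  by rewrite -m1 pair_bigA; apply: eq_bigr => -[].
- move=> w lam0w; rewrite /marginal -sum_fst.
  apply: (proj1 (limit_pair_sum _)) => n ws xs ys _ /Qeq[ws_supp _ _].
  rewrite !sum_emp !big1 ?mulr0 // => i _ /=.
  by rewrite (negbTE (contraNneq _ (ws_supp i))) // => ->; rewrite lam0w.
- split => //; apply: limit_pair_wardrop => n ws xs ys /Qeq[_ ? _] //.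
- by split; [|split] => // w; exact: limit_pair_marginal.
Qed.

End Limit.

Lemma Nash_Vsoc_lt_eventually lam0 : isProb lam0 -> forall eps, 0 < eps ->
  exists N, forall n, (N <= n)%N -> forall ws : 'I_n -> W,
    (forall i, lam0 (ws i) != 0) -> forall xs ys, nash c C ws xs -> feasible C ws ys ->
    Vsoc c (emp R ws xs) < (PoA_star c C lam0 + eps) * Vsoc c (emp R ws ys).
Proof.
move=> lam0P eps eps0; set Rs := PoA_star c C lam0.
pose bad n (ws : 'I_n -> W) xs ys := [/\ forall i, lam0 (ws i) != 0,
  nash c C ws xs, feasible C ws ys &
  (Rs + eps) * Vsoc c (emp R ws ys) <= Vsoc c (emp R ws xs)].
apply: contrapT => never_good.
have [m [a lim]] : exists m a, limit_pair bad m a.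
  apply: exists_limit_pair => K; apply: contrapT => no_bad; apply: never_good.
  exists K.+1 => n Kn ws ws_supp xs ys xs_nash ys_feas.
  rewrite ltNge; apply/negP => Vle; apply: no_bad.
  by exists n, ws, xs, ys.
have [lamP lam_ac mW aA] : [/\ isProb (marginal m), abs_cont (marginal m) lam0,
    wardrop c C (marginal m) m & admissible C (marginal m) a].
  by apply: (limit_pair_equilibrium lim) => n ws xs ys [].
have [b b0 b_le] := Vsoc_lower_bound.
have Va0 : 0 < Vsoc c a by case: aA => aP [_ aC]; exact: lt_le_trans b0 (b_le a aP aC).
have Rs0 : 0 <= Rs := PoA_star_ge0 lam0P.
have ratio : (Rs + eps) * Vsoc c a <= Vsoc c m.
  by apply: (limit_pair_Vsoc_ratio lim) => [|n ws xs ys []]; first lra.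
have := le_trans (Vsoc_ratio_le_PoA b0 b_le mW aA) (PoA_le_PoA_star b0 b_le lamP lam_ac).
rewrite ler_pdivrMr // -/Rs => Vm_le.
have : eps * Vsoc c a <= 0 by rewrite mulrDl in ratio; lra.
by rewrite leNgt mulr_gt0.
Qed.

Hypothesis hC_nonempty : forall w, C w != finset.set0.

Lemma exists_feasible n (ws : 'I_n -> W) : exists ys, feasible C ws ys.
Proof.
exists (fun i => xchoose (set0Pn _ (hC_nonempty (ws i)))) => i.
exact: xchooseP.
Qed.

Lemma PoA_n_le n (ws : 'I_n -> W) r : (0 < n)%N -> 0 < r ->
  (forall xs ys, nash c C ws xs -> feasible C ws ys ->
    Vsoc c (emp R ws xs) <= r * Vsoc c (emp R ws ys)) ->
  PoA_n c C ws <= r.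
Proof.
move=> n0 r0 ratio; rewrite /PoA_n.
set SF := [set Vsoc c (emp R ws xs) | xs in [set xs | feasible C ws xs]].
have [b b0 b_le] := Vsoc_lower_bound.
have [ys0 ys0_feas] := exists_feasible ws.
have SF_ne : SF !=set0 by exists (Vsoc c (emp R ws ys0)), ys0.
have infSF0 : 0 < inf SF.
  apply: lt_le_trans b0 (lb_le_inf SF_ne _) => _ [ys ys_feas <-].
  by apply: b_le; [exact: emp_isProb | exact: sum_emp_eq1].
rewrite ler_pdivrMr //; apply: sup_le_ge0 => [|_ [xs xs_nash <-]].
  by rewrite mulr_ge0 ?ltW.
rewrite mulrC -ler_pdivrMr //; apply: (lb_le_inf SF_ne) => _ [ys ys_feas <-].
by rewrite ler_pdivrMr // mulrC; exact: ratio.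
Qed.

End Game.

Theorem corollary2p12 (R : realType) (W E : finType)
  (C : W -> {set {set E}}) (c : E -> R -> R) (lam0 : W -> R)
  (hC_nonempty : forall w, C w != finset.set0)
  (hC_X : forall w, finset.set0 \notin C w)
  (hc_cont : forall e, {within [set t : R | 0 <= t], continuous (c e)})
  (hc_nneg : forall e t, 0 <= t -> 0 <= c e t)
  (hc_incr : forall e s t, 0 <= s -> s <= t -> c e s <= c e t)
  (hpos : forall w x, x \in C w -> exists e, e \in x /\ forall t, 0 < t -> 0 < c e t)
  (hlam0 : isProb lam0) :
  forall eps cc : R, 0 < eps -> 0 < cc ->
  exists N : nat, forall n : nat, (N <= n)%N ->
    prob_PoA_ge c C lam0 n (PoA_star c C lam0 + eps) <= expR (- (cc * n%:R)).
Proof.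
move=> eps cc eps0 _; have eps2 : 0 < eps / 2 by rewrite divr_gt0.
have [N Nash_lt] := Nash_Vsoc_lt_eventually hc_cont hc_nneg hc_incr hpos hlam0 eps2.
exists N.+1 => n Nn; rewrite /prob_PoA_ge big1 ?expR_ge0 // => ws _.
have [->|/prodf_neq0 ws_supp] := eqVneq (\prod_(i < n) lam0 (ws i)) 0.
  by rewrite mul0r.
have PoA_n_small : PoA_n c C (fun i => ws i) <= PoA_star c C lam0 + eps / 2.
  apply: (PoA_n_le hc_nneg hc_incr hpos hC_nonempty) => [||xs ys xs_nash ys_feas].
  - exact: leq_ltn_trans Nn.
  - by rewrite ltr_wpDl // (PoA_star_ge0 hc_nneg hc_incr hpos hlam0).
  - by apply/ltW/Nash_lt => //; [exact: ltnW | move=> i; exact: ws_supp].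
suff -> : (PoA_star c C lam0 + eps <= PoA_n c C (fun i => ws i)) = false.
  by rewrite mulr0.
by apply/negbTE; rewrite -ltNge (le_lt_trans PoA_n_small) // ltrD2l; lra.
Qed.
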